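(* In the construction described in the context, for each $k\in\mathbb{N}$ the map $\pi_k:\mathcal P_\infty\to[0,1]$ (the $k$-th coordinate) is continuous and extends continuously to $P_\infty$. Moreover, for every $\bar x\in P_\infty\setminus i_k(P_k)$ one has $\pi_k(\bar x)\in A_k:=\pi_k(Q_k)$.
   Context: Construction. Let $(e_n)$ be the canonical basis of $\ell^1(\mathbb{N})$; $\alpha(t)=t$ on $[0,\frac12]$, $\alpha(t)=1-t$ on $[\frac12,1]$; $S_n=\{te_1+\alpha(t)e_{n+1}:t\in[0,1]\}$; $x_n=(\frac12-\frac1{2^n})e_1$, $x_\infty=\frac12e_1$; $Y=\bigcup_{n\ge1}(2^{-(n+1)}S_n+x_n)\cup\{x_\infty\}$ with the $\ell^1$ metric $\theta$. $Y$ is the image of an arc-length parametrized injective curve $\gamma:[0,1]\to Y$ with $\gamma(0)=0$, $\gamma(1)=x_\infty$. For $r>0$ let $\theta_r(s,t)=r\,\theta(\gamma(s/r),\gamma(t/r))$ on $[0,r]$. Set $P_1=[0,1]$, $\rho_1=\theta_1$, $L_1=\{1\}$. Given $(P_k,\rho_k)$ with $P_k\subset[0,1]^k$ and $L_k\subset P_k$, let $\pi_k$ denote the $k$-th coordinate, choose a countable dense subset $Q_k=\{q_n:n\in\mathbb{N}\}$ (distinct $q_n$) of $P_k\setminus L_k$ with $\pi_k$ injective on $Q_k$ and $0\notin\pi_k(Q_k)$, set $r_n=2^{-(n+k)}$, $d_n=\theta_{r_n}$, and let $P_{k+1}=\{(x,0):x\in P_k\setminus Q_k\}\cup\{(q_n,y):n\in\mathbb{N},y\in[0,r_n]\}\subset[0,1]^{k+1}$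 with metric $\rho_{k+1}((x_1,y_1),(x_2,y_2))$ equal to $d_n(y_1,y_2)$ if $x_1=x_2=q_n$; $d_n(y_1,0)+\rho_k(x_1,x_2)+d_m(0,y_2)$ if $x_1=q_n,x_2=q_m$, $n\ne m$; $d_n(y_1,0)+\rho_k(x_1,x_2)$ if $x_1=q_n$, $x_2\notin Q_k$ (and symmetrically); $\rho_k(x_1,x_2)$ if $x_1,x_2\notin Q_k$. Let $L_{k+1}=(L_k\times\{0\})\cup\{(q_n,r_n):n\in\mathbb{N}\}$. Let $i_k:P_k\to[0,1]^{\mathbb{N}}$, $i_k(x)=(x_1,\dots,x_k,0,0,\dots)$; $\mathcal P_\infty=\bigcup_k i_k(P_k)$ with the metric $\rho_\infty(x,y)=\rho_k(i_k^{-1}x,i_k^{-1}y)$ for $x,y\in i_k(P_k)$ (well defined since the natural embeddings $P_k\to P_{k'}$ are isometries); $(P_\infty,\rho_\infty)$ is the completion of $(\mathcal P_\infty,\rho_\infty)$, and $i_k$ is regarded as a map into $P_\infty$. On $\mathcal P_\infty\subset[0,1]^{\mathbb{N}}$, $\pi_k$ is the $k$-th coordinate. *)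

From Stdlib Require Import Reals Lra ClassicalEpsilon.
From Coquelicot Require Import Coquelicot.
Open Scope R_scope.

(* Points of [0,1]^N (and of l^1(N)) are represented as sequences nat -> R,
   with 0-based indices: paper coordinate j (j >= 1) is index j-1.
   Thus the paper's e_1 is index 0, e_{n+1} is index n.
   A point of P_k is represented by i_k(x), i.e. a sequence that vanishes
   at all indices >= k. *)
Definition seqR := nat -> R.

Definition l1dist (x y : seqR) : R := Series (fun i => Rabs (x i - y i)).

(* The arc-length parametrization gamma : [0,1] -> Y:
   piece n (n >= 1), i.e. 2^{-(n+1)} S_n + x_n, is traversed for
   s in [1 - 2/2^n, 1 - 1/2^n]; gamma(s) = (s/2) e_1 + h_n(s) e_{n+1},
   where h_n is the tent function of slope 1/2 on that interval. *)
Definition piece_lo (n : nat) : R := 1 - 2 / 2 ^ n.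
Definition piece_hi (n : nat) : R := 1 - 1 / 2 ^ n.
Definition hgt (n : nat) (s : R) : R :=
  Rmax 0 (Rmin (s - piece_lo n) (piece_hi n - s)) / 2.
Definition gamma (s : R) : seqR :=
  fun i => match i with O => s / 2 | S _ => hgt i s end.

Definition theta (r s t : R) : R := r * l1dist (gamma (s / r)) (gamma (t / r)).

(* Truncation: keeps indices < k (paper coordinates 1..k). *)
Definition trunc (k : nat) (z : seqR) : seqR :=
  fun i => if (i <? k)%nat then z i else 0.

(* The choice data: q k m is the paper's q_{m+1} in Q_k (for k >= 1). *)
(* r_n at level k, with n = m+1 :  2^{-(n+k)} *)
Definition rr (k m : nat) : R := (1 / 2) ^ (m + 1 + k).

Definition decP (P : Prop) : {P} + {~ P} := excluded_middle_informative P.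
Definition inQ (q : nat -> nat -> seqR) (k : nat) (x : seqR) : Prop :=
  exists m, x = q k m.
Definition idx (q : nat -> nat -> seqR) (k : nat) (x : seqR) : nat :=
  epsilon (inhabits 0%nat) (fun m => x = q k m).

(* Stage j of the recursion is the paper's level j+1. *)
Fixpoint Pst (q : nat -> nat -> seqR) (j : nat) : seqR -> Prop :=
  match j with
  | O => fun z => 0 <= z 0%nat <= 1 /\ (forall i, (1 <= i)%nat -> z i = 0)
  | S j' => fun z =>
      let k := S j' in
      Pst q j' (trunc k z) /\ (forall i, (k < i)%nat -> z i = 0) /\
      (z k = 0 \/ exists m, trunc k z = q k m /\ 0 <= z k <= rr k m)
  end.

Fixpoint rhost (q : nat -> nat -> seqR) (j : nat) : seqR -> seqR -> R :=
  match j with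
  | O => fun z1 z2 => theta 1 (z1 0%nat) (z2 0%nat)
  | S j' => fun z1 z2 =>
      let k := S j' in
      let x1 := trunc k z1 in let x2 := trunc k z2 in
      let y1 := z1 k in let y2 := z2 k in
      let n1 := idx q k x1 in let n2 := idx q k x2 in
      let d := fun n a b => theta (rr k n) a b in
      if decP (inQ q k x1) then
        if decP (inQ q k x2) then
          if Nat.eq_dec n1 n2 then d n1 y1 y2
          else d n1 y1 0 + rhost q j' x1 x2 + d n2 0 y2
        else d n1 y1 0 + rhost q j' x1 x2
      else if decP (inQ q k x2) then rhost q j' x1 x2 + d n2 0 y2
      else rhost q j' x1 x2
  end.

Fixpoint Lst (q : nat -> nat -> seqR) (j : nat) : seqR -> Prop :=
  match j with
  | O => fun z => z 0%nat = 1 /\ (forall i, (1 <= i)%nat -> z i = 0)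
  | S j' => fun z =>
      let k := S j' in
      (forall i, (k < i)%nat -> z i = 0) /\
      ((z k = 0 /\ Lst q j' (trunc k z)) \/
       exists m, trunc k z = q k m /\ z k = rr k m)
  end.

Definition PP q (k : nat) := Pst q (Nat.pred k).
Definition RHO q (k : nat) := rhost q (Nat.pred k).
Definition LL q (k : nat) := Lst q (Nat.pred k).
Definition pi (k : nat) (z : seqR) : R := z (Nat.pred k).

Definition admissible (q : nat -> nat -> seqR) : Prop :=
  forall k, (1 <= k)%nat ->
    (forall m, PP q k (q k m) /\ ~ LL q k (q k m)) /\
    (forall m m', q k m = q k m' -> m = m') /\
    (forall m m', pi k (q k m) = pi k (q k m') -> m = m') /\
    (forall m, pi k (q k m) <> 0) /\
    (forall x, PP q k x -> ~ LL q k x ->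
       forall eps, 0 < eps -> exists m, RHO q k x (q k m) < eps).

Definition Pinf q (z : seqR) : Prop := exists k, (1 <= k)%nat /\ PP q k z.
Definition rhoinf q (x y : seqR) : R :=
  RHO q (epsilon (inhabits 1%nat)
           (fun k => (1 <= k)%nat /\ PP q k x /\ PP q k y)) x y.

Definition is_metric {X : Type} (d : X -> X -> R) : Prop :=
  (forall x y, 0 <= d x y) /\ (forall x y, d x y = 0 <-> x = y) /\
  (forall x y, d x y = d y x) /\ (forall x y z, d x z <= d x y + d y z).

Definition complete_metric {X : Type} (d : X -> X -> R) : Prop :=
  forall u : nat -> X,
    (forall eps, 0 < eps -> exists N, forall m n, (N <= m)%nat -> (N <= n)%nat ->
        d (u m) (u n) < eps) ->
    exists l, forall eps, 0 < eps -> exists N, forall n, (N <= n)%nat -> d (u n) l < eps.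

Definition is_completion q {X : Type} (d : X -> X -> R) (j : seqR -> X) : Prop :=
  is_metric d /\ complete_metric d /\
  (forall x y, Pinf q x -> Pinf q y -> d (j x) (j y) = rhoinf q x y) /\
  (forall x eps, 0 < eps -> exists z, Pinf q z /\ d x (j z) < eps).

(* Since theta_r(s,t) >= |s - t| / 2, every coordinate is 2-Lipschitz for the metric of
   every level; so pi_k is Lipschitz on cal P_infinity and extends to a Lipschitz map on the
   completion.  By induction on the level, each P_k is complete (a Cauchy sequence has
   convergent roots one level down, and convergent heights over the limit root), hence a point
   x of the completion outside i_k(P_k) is at positive distance from it.  The metric is a tree
   metric: two points of cal P_infinity on different branches over P_k are joined through
   P_k.  So all points of cal P_infinity close to x lie over one q in Q_k, where pi_k equals
   pi_k(q), and the extension takes this value at x. *)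

From Stdlib Require Import Reals Lra Lia Classical ClassicalEpsilon FunctionalExtensionality.
From Coquelicot Require Import Coquelicot.
Open Scope R_scope.

(** * The arc [gamma] and the metrics [theta r] *)

Lemma series_nonneg_bounded (a : nat -> R) (M : R) :
  (forall n, 0 <= a n) -> (forall n, sum_n a n <= M) ->
  ex_series a /\ a 0%nat <= Series a <= M.
Proof.
  intros Ha HM.
  assert (Hincr : forall n, sum_n a n <= sum_n a (S n)).
  { intros n. rewrite sum_Sn. pose proof (Ha (S n)). unfold plus; simpl. lra. }
  destruct (ex_finite_lim_seq_incr _ M Hincr HM) as [l Hl].
  assert (HS : Series a = l) by (apply is_series_unique; exact Hl).
  split; [exists l; exact Hl|]. rewrite HS. split.
  - rewrite <- (sum_O a). exact (is_lim_seq_incr_compare _ _ Hl Hincr 0).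
  - exact (is_lim_seq_le _ _ l M HM Hl (is_lim_seq_const M)).
Qed.

Definition clamp (lo hi x : R) : R := Rmax lo (Rmin x hi).

Lemma clamp_concat a b c x : a <= b <= c -> clamp a b x + clamp b c x = clamp a c x + b.
Proof. intros H. unfold clamp, Rmax, Rmin. repeat destruct Rle_dec; lra. Qed.

Lemma clamp_incr_le lo hi s t : lo <= hi -> s <= t -> 0 <= clamp lo hi t - clamp lo hi s <= t - s.
Proof. intros H Hst. unfold clamp, Rmax, Rmin. repeat destruct Rle_dec; lra. Qed.

Lemma hgt_diff_le_clamp n s t : s <= t ->
  Rabs (hgt n s - hgt n t)
  <= (clamp (piece_lo n) (piece_hi n) t - clamp (piece_lo n) (piece_hi n) s) / 2.
Proof.
  intros Hst. assert (piece_lo n <= piece_hi n).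
  { unfold piece_lo, piece_hi, Rdiv. pose proof (Rinv_0_lt_compat _ (pow_lt 2 n ltac:(lra))). lra. }
  unfold hgt, clamp. set (lo := piece_lo n) in *; set (hi := piece_hi n) in *.
  unfold Rmax, Rmin; repeat destruct Rle_dec; unfold Rabs; destruct Rcase_abs; lra.
Qed.

Lemma piece_lo_S n : piece_lo (S n) = piece_hi n.
Proof. unfold piece_lo, piece_hi. simpl. field. apply pow_nonzero. lra. Qed.

Lemma piece_hi_bounds n : 0 <= piece_hi n <= piece_hi (S n).
Proof.
  unfold piece_hi, Rdiv. simpl. rewrite Rinv_mult.
  assert (H1 : 1 <= 2 ^ n) by (apply pow_R1_Rle; lra).
  pose proof (Rinv_le_contravar 1 (2 ^ n) ltac:(lra) H1) as Hinv. rewrite Rinv_1 in Hinv.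
  pose proof (Rinv_0_lt_compat (2 ^ n) ltac:(lra)). lra.
Qed.

(* [gamma] is parametrized by arc length: its first coordinate moves at speed 1/2, and the
   tents, of slope 1/2 on consecutive intervals, share the other 1/2; the partial sums
   telescope by [clamp_concat]. *)
Lemma gamma_partial_sums_le s t : s <= t ->
  forall N, sum_n (fun i => Rabs (gamma s i - gamma t i)) N <= t - s.
Proof.
  intros Hst N.
  enough (H : sum_n (fun i => Rabs (gamma s i - gamma t i)) N
              <= (t - s) / 2 + (clamp 0 (piece_hi N) t - clamp 0 (piece_hi N) s) / 2).
  { pose proof (clamp_incr_le 0 (piece_hi N) s t (proj1 (piece_hi_bounds N)) Hst). lra. }
  induction N as [|N IH].
  - rewrite sum_O. simpl. unfold piece_hi, clamp, Rmax, Rmin.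
    rewrite Rabs_minus_sym, Rabs_pos_eq by lra. repeat destruct Rle_dec; lra.
  - rewrite sum_Sn. unfold plus; simpl.
    pose proof (hgt_diff_le_clamp (S N) s t Hst) as Hh. rewrite piece_lo_S in Hh.
    pose proof (clamp_concat 0 (piece_hi N) (piece_hi (S N)) s (piece_hi_bounds N)).
    pose proof (clamp_concat 0 (piece_hi N) (piece_hi (S N)) t (piece_hi_bounds N)).
    lra.
Qed.

Lemma l1dist_gamma_bounds s t :
  Rabs (s - t) / 2 <= l1dist (gamma s) (gamma t) <= Rabs (s - t).
Proof.
  assert (Hle : forall s t, s <= t ->
            Rabs (s - t) / 2 <= l1dist (gamma s) (gamma t) <= Rabs (s - t)).
  { clear s t. intros s t Hst. unfold l1dist.
    destruct (series_nonneg_bounded _ (t - s) (fun i => Rabs_pos _) (gamma_partial_sums_le s t Hst))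
      as [_ H]. simpl in H.
    rewrite Rabs_minus_sym, Rabs_pos_eq in H by lra.
    rewrite Rabs_minus_sym, Rabs_pos_eq by lra. lra. }
  destruct (Rle_dec s t) as [Hst|Hst]; [apply Hle; exact Hst|].
  unfold l1dist. rewrite (Series_ext _ (fun i => Rabs (gamma t i - gamma s i)))
    by (intros; apply Rabs_minus_sym).
  rewrite Rabs_minus_sym. apply Hle. lra.
Qed.

Lemma theta_bounds r s t : 0 < r -> Rabs (s - t) / 2 <= theta r s t <= Rabs (s - t).
Proof.
  intros Hr. unfold theta. pose proof (l1dist_gamma_bounds (s / r) (t / r)) as H.
  replace (s / r - t / r) with ((s - t) / r) in H by (field; lra).
  unfold Rdiv in H.
  rewrite Rabs_mult, (Rabs_pos_eq (/ r)) in H by (left; apply Rinv_0_lt_compat; lra).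
  destruct H as [H1 H2]. apply Rmult_le_compat_l with (r := r) in H1, H2; [|lra..].
  replace (r * (Rabs (s - t) * / r * / 2)) with (Rabs (s - t) / 2) in H1 by (field; lra).
  replace (r * (Rabs (s - t) * / r)) with (Rabs (s - t)) in H2 by (field; lra).
  split; assumption.
Qed.

Lemma theta_sym r s t : theta r s t = theta r t s.
Proof. unfold theta, l1dist. f_equal. apply Series_ext. intros. apply Rabs_minus_sym. Qed.

Lemma rr_pos k m : 0 < rr k m.
Proof. unfold rr. apply pow_lt. lra. Qed.

Lemma theta_rr_bounds k m s t : Rabs (s - t) / 2 <= theta (rr k m) s t <= Rabs (s - t).
Proof. apply theta_bounds, rr_pos. Qed.

Lemma theta_rr_nonneg k m s t : 0 <= theta (rr k m) s t.
Proof. pose proof (theta_rr_bounds k m s t). pose proof (Rabs_pos (s - t)). lra. Qed.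

Lemma theta_rr_refl k m s : theta (rr k m) s s = 0.
Proof.
  pose proof (theta_rr_bounds k m s s). rewrite Rminus_diag, Rabs_R0 in H. lra.
Qed.

(** * The levels [P_k] and their metrics *)

Section Levels.

Variable q : nat -> nat -> seqR.

Definition rho_step k (R0 : seqR -> seqR -> R) x1 x2 y1 y2 : R :=
  let n1 := idx q k x1 in let n2 := idx q k x2 in
  let d := fun n a b => theta (rr k n) a b in
  if decP (inQ q k x1) then
    if decP (inQ q k x2) then
      if Nat.eq_dec n1 n2 then d n1 y1 y2
      else d n1 y1 0 + R0 x1 x2 + d n2 0 y2
    else d n1 y1 0 + R0 x1 x2
  else if decP (inQ q k x2) then R0 x1 x2 + d n2 0 y2
  else R0 x1 x2.

Lemma rhost_S j z w : rhost q (S j) z w =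
  rho_step (S j) (rhost q j) (trunc (S j) z) (trunc (S j) w) (z (S j)) (w (S j)).
Proof. reflexivity. Qed.

Lemma idx_spec k x : inQ q k x -> q k (idx q k x) = x.
Proof.
  intros H. symmetry. apply (epsilon_spec (inhabits 0%nat) (fun m => x = q k m)). exact H.
Qed.

Lemma idx_inj k x1 x2 : inQ q k x1 -> inQ q k x2 -> idx q k x1 = idx q k x2 -> x1 = x2.
Proof. intros H1 H2 E. rewrite <- (idx_spec k x1 H1), <- (idx_spec k x2 H2), E. reflexivity. Qed.

Ltac rho_step_cases k x1 x2 :=
  unfold rho_step;
  destruct (decP (inQ q k x1)) as [i1|i1]; destruct (decP (inQ q k x2)) as [i2|i2];
  try match goal with |- context [Nat.eq_dec ?a ?b] => destruct (Nat.eq_dec a b) as [e|e] end;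
  try match goal with
      | i1 : inQ q k x1, i2 : inQ q k x2, e : idx q k x1 = idx q k x2 |- _ =>
          pose proof (idx_inj k x1 x2 i1 i2 e); subst x2
      end.

Section Step.

Variables (k : nat) (R0 : seqR -> seqR -> R).
Hypotheses (R0_refl : forall x, R0 x x = 0) (R0_nonneg : forall x y, 0 <= R0 x y).

Lemma rho_step_nonneg x1 x2 y1 y2 : 0 <= rho_step k R0 x1 x2 y1 y2.
Proof.
  pose proof (theta_rr_nonneg k (idx q k x1) y1 y2).
  pose proof (theta_rr_nonneg k (idx q k x1) y1 0); pose proof (theta_rr_nonneg k (idx q k x2) 0 y2).
  pose proof (R0_nonneg x1 x2).
  rho_step_cases k x1 x2; lra.
Qed.

Lemma rho_step_refl x y : rho_step k R0 x x y y = 0.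
Proof. rho_step_cases k x x; try congruence; auto using theta_rr_refl. Qed.

Lemma rho_step_sym x1 x2 y1 y2 : (forall x y, R0 x y = R0 y x) ->
  rho_step k R0 x1 x2 y1 y2 = rho_step k R0 x2 x1 y2 y1.
Proof.
  intros Hsym. pose proof (Hsym x1 x2).
  pose proof (theta_sym (rr k (idx q k x1)) y1 0); pose proof (theta_sym (rr k (idx q k x2)) 0 y2);
  pose proof (theta_sym (rr k (idx q k x1)) y1 y2).
  unfold rho_step.
  destruct (decP (inQ q k x1)); destruct (decP (inQ q k x2));
    repeat match goal with |- context [Nat.eq_dec ?a ?b] => destruct (Nat.eq_dec a b) end;
    try congruence; try lra.
  all: rewrite e; lra.
Qed.

Lemma rho_step_ge x1 x2 y1 y2 : R0 x1 x2 <= rho_step k R0 x1 x2 y1 y2.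
Proof.
  pose proof (theta_rr_nonneg k (idx q k x1) y1 y2).
  pose proof (theta_rr_nonneg k (idx q k x1) y1 0); pose proof (theta_rr_nonneg k (idx q k x2) 0 y2).
  rho_step_cases k x1 x2; try rewrite R0_refl; lra.
Qed.

Lemma rho_step_zero x1 x2 : rho_step k R0 x1 x2 0 0 = R0 x1 x2.
Proof. rho_step_cases k x1 x2; rewrite ?theta_rr_refl, ?R0_refl; ring. Qed.

Lemma rho_step_same x y1 y2 : rho_step k R0 x x y1 y2 <= Rabs (y1 - y2).
Proof.
  pose proof (theta_rr_bounds k (idx q k x) y1 y2). pose proof (Rabs_pos (y1 - y2)).
  rho_step_cases k x x; try congruence; rewrite ?R0_refl; lra.
Qed.

Lemma rho_step_branch x1 x2 y1 y2 : inQ q k x1 -> x1 <> x2 ->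
  theta (rr k (idx q k x1)) y1 0 <= rho_step k R0 x1 x2 y1 y2.
Proof.
  intros iq ne. pose proof (theta_rr_nonneg k (idx q k x2) 0 y2). pose proof (R0_nonneg x1 x2).
  rho_step_cases k x1 x2; try contradiction; lra.
Qed.

Lemma rho_step_top x1 x2 y1 y2 : (y1 = 0 \/ inQ q k x1) -> (y2 = 0 \/ inQ q k x2) ->
  Rabs (y1 - y2) <= 2 * rho_step k R0 x1 x2 y1 y2.
Proof.
  intros H1 H2.
  pose proof (theta_rr_bounds k (idx q k x1) y1 y2).
  pose proof (theta_rr_bounds k (idx q k x1) y1 0); pose proof (theta_rr_bounds k (idx q k x2) 0 y2).
  pose proof (R0_nonneg x1 x2). pose proof (Rdist_tri y1 y2 0). unfold Rdist in *.
  rho_step_cases k x1 x2; try lra;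
    repeat match goal with H : _ \/ _ |- _ => destruct H; [subst|contradiction] end;
    rewrite ?Rminus_diag, ?Rabs_R0; lra.
Qed.

Lemma rho_step_le x1 x2 y1 y2 A C : x1 <> x2 ->
  (inQ q k x1 -> theta (rr k (idx q k x1)) y1 0 <= A) ->
  (inQ q k x2 -> theta (rr k (idx q k x2)) 0 y2 <= C) -> 0 <= A -> 0 <= C ->
  rho_step k R0 x1 x2 y1 y2 <= A + R0 x1 x2 + C.
Proof.
  intros ne HA HC A0 C0. rho_step_cases k x1 x2; try contradiction.
  - specialize (HA i1). specialize (HC i2). lra.
  - specialize (HA i1). lra.
  - specialize (HC i2). lra.
  - lra.
Qed.

Lemma rho_step_root x p x' y1 y2 : x <> x' -> R0 x p <= R0 x x' ->
  rho_step k R0 x p y1 0 <= rho_step k R0 x x' y1 y2.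
Proof.
  intros ne Hle.
  pose proof (theta_rr_nonneg k (idx q k x) y1 0); pose proof (theta_rr_nonneg k (idx q k x') 0 y2).
  pose proof (R0_nonneg x p); pose proof (R0_nonneg x x').
  unfold rho_step.
  destruct (decP (inQ q k x)) as [ia|ia]; destruct (decP (inQ q k p)) as [ip|ip];
    destruct (decP (inQ q k x')) as [ia'|ia'];
    repeat match goal with |- context [Nat.eq_dec ?a ?b] => destruct (Nat.eq_dec a b) end;
    rewrite ?theta_rr_refl; try lra; exfalso; apply ne; apply (idx_inj k x x'); auto.
Qed.

End Step.

Lemma trunc_lt k z i : (i < k)%nat -> trunc k z i = z i.
Proof. intros H. unfold trunc. destruct (Nat.ltb_spec i k); [reflexivity | lia]. Qed.

Lemma trunc_ge k z i : (k <= i)%nat -> trunc k z i = 0.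
Proof. intros H. unfold trunc. destruct (Nat.ltb_spec i k); [lia | reflexivity]. Qed.

Lemma trunc_id k z : (forall i, (k <= i)%nat -> z i = 0) -> trunc k z = z.
Proof.
  intros H. apply functional_extensionality. intros i. unfold trunc.
  destruct (Nat.ltb_spec i k); [reflexivity | symmetry; apply H; lia].
Qed.

Lemma trunc_trunc k k' z : (k <= k')%nat -> trunc k (trunc k' z) = trunc k z.
Proof.
  intros H. apply functional_extensionality. intros i. unfold trunc.
  destruct (Nat.ltb_spec i k); destruct (Nat.ltb_spec i k'); reflexivity || lia.
Qed.

Lemma trunc_trunc_le k k' z : (k <= k')%nat -> trunc k' (trunc k z) = trunc k z.
Proof. intros H. apply trunc_id. intros i Hi. apply trunc_ge. lia. Qed.

Lemma Pst_vanish j z : Pst q j z -> forall i, (j < i)%nat -> z i = 0.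
Proof.
  destruct j as [|j]; simpl.
  - intros [_ H] i Hi. apply H. lia.
  - intros [_ [H _]]. exact H.
Qed.

Lemma Pst_trunc_id j z : Pst q j z -> trunc (S j) z = z.
Proof. intros H. apply trunc_id. intros i Hi. apply (Pst_vanish j z H). lia. Qed.

Lemma Pst_trunc j z : Pst q (S j) z -> Pst q j (trunc (S j) z).
Proof. simpl. tauto. Qed.

Lemma Pst_top j z : Pst q (S j) z -> z (S j) = 0 \/ inQ q (S j) (trunc (S j) z).
Proof. simpl. intros [_ [_ [H | [m [Hm _]]]]]; [left | right; exists m]; assumption. Qed.

Lemma Pst_S j z : Pst q j z -> Pst q (S j) z.
Proof.
  intros H. simpl. rewrite (Pst_trunc_id j z H).
  split; [exact H | split]; [intros i Hi | left]; apply (Pst_vanish j z H); lia.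
Qed.

Lemma Pst_le j j' z : (j <= j')%nat -> Pst q j z -> Pst q j' z.
Proof. intros Hle Hz. induction Hle; auto using Pst_S. Qed.

Lemma rhost_nonneg j z w : 0 <= rhost q j z w.
Proof.
  revert z w. induction j as [|j IH]; intros z w.
  - pose proof (theta_bounds 1 (z 0%nat) (w 0%nat) ltac:(lra)).
    pose proof (Rabs_pos (z 0%nat - w 0%nat)). simpl. lra.
  - rewrite rhost_S. apply rho_step_nonneg. exact IH.
Qed.

Lemma rhost_refl j z : rhost q j z z = 0.
Proof.
  revert z. induction j as [|j IH]; intros z.
  - pose proof (theta_bounds 1 (z 0%nat) (z 0%nat) ltac:(lra)). rewrite Rminus_diag, Rabs_R0 in H.
    simpl. lra.
  - rewrite rhost_S. apply rho_step_refl. exact IH.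
Qed.

Lemma rhost_sym j z w : rhost q j z w = rhost q j w z.
Proof.
  revert z w. induction j as [|j IH]; intros z w.
  - apply theta_sym.
  - rewrite !rhost_S. apply rho_step_sym. exact IH.
Qed.

Lemma rhost_trunc_le j z w : rhost q j (trunc (S j) z) (trunc (S j) w) <= rhost q (S j) z w.
Proof. rewrite rhost_S. apply rho_step_ge, rhost_refl. Qed.

Lemma rhost_S_stable j z w : Pst q j z -> Pst q j w -> rhost q (S j) z w = rhost q j z w.
Proof.
  intros Hz Hw. rewrite rhost_S, (Pst_trunc_id j z Hz), (Pst_trunc_id j w Hw).
  rewrite (Pst_vanish j z Hz (S j)), (Pst_vanish j w Hw (S j)) by lia.
  apply rho_step_zero, rhost_refl.
Qed.

Lemma rhost_stable j j' z w : (j <= j')%nat -> Pst q j z -> Pst q j w ->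
  rhost q j' z w = rhost q j z w.
Proof.
  induction 1 as [|j' Hle IH]; intros Hz Hw; [reflexivity|].
  rewrite rhost_S_stable; auto; apply (Pst_le j); auto.
Qed.

Lemma rhoinf_eq L z w : Pst q L z -> Pst q L w -> rhoinf q z w = rhost q L z w.
Proof.
  intros Hz Hw. unfold rhoinf, RHO.
  destruct (epsilon_spec (inhabits 1%nat) (fun k => (1 <= k)%nat /\ PP q k z /\ PP q k w))
    as [_ [Hz0 Hw0]].
  { exists (S L). split; [lia | split; assumption]. }
  set (k0 := epsilon _ _) in *. unfold PP in *.
  rewrite <- (rhost_stable (Nat.pred k0) (Nat.max (Nat.pred k0) L) z w) by (auto; lia).
  rewrite <- (rhost_stable L (Nat.max (Nat.pred k0) L) z w) by (auto; lia).
  reflexivity.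
Qed.

Lemma Pinf_common z w : Pinf q z -> Pinf q w ->
  forall L0, exists L, (L0 <= L)%nat /\ Pst q L z /\ Pst q L w.
Proof.
  intros [a [_ Ha]] [b [_ Hb]] L0. exists (Nat.max L0 (Nat.max (Nat.pred a) (Nat.pred b))).
  split; [lia | split]; [apply (Pst_le (Nat.pred a)) | apply (Pst_le (Nat.pred b))]; auto; lia.
Qed.

Lemma coord_le_rhost j z w c : Pst q j z -> Pst q j w -> (c <= j)%nat ->
  Rabs (z c - w c) <= 2 * rhost q j z w.
Proof.
  revert z w c. induction j as [|j IH]; intros z w c Hz Hw Hc.
  - replace c with 0%nat by lia. pose proof (theta_bounds 1 (z 0%nat) (w 0%nat) ltac:(lra)).
    simpl. lra.
  - destruct (Nat.eq_dec c (S j)) as [-> | ne].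
    + rewrite rhost_S. apply rho_step_top; [apply rhost_nonneg | apply Pst_top..]; assumption.
    + rewrite <- (trunc_lt (S j) z c), <- (trunc_lt (S j) w c) by lia.
      pose proof (rhost_trunc_le j z w).
      pose proof (IH _ _ c (Pst_trunc j z Hz) (Pst_trunc j w Hw) ltac:(lia)). lra.
Qed.

Lemma rhost_eq0 j z w : Pst q j z -> Pst q j w -> rhost q j z w = 0 -> z = w.
Proof.
  intros Hz Hw H. apply functional_extensionality. intros c.
  destruct (Nat.le_gt_cases c j).
  - pose proof (coord_le_rhost j z w c Hz Hw H0). rewrite H, Rmult_0_r in H1.
    pose proof (Rabs_pos (z c - w c)). apply Rminus_diag_uniq, Rabs_eq_0. lra.
  - rewrite (Pst_vanish j z Hz c), (Pst_vanish j w Hw c); auto.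
Qed.

Lemma top_le_rhost_off_branch j z w : Pst q (S j) z -> trunc (S j) z <> trunc (S j) w ->
  Rabs (z (S j)) <= 2 * rhost q (S j) z w.
Proof.
  intros Hz ne. pose proof (rhost_nonneg (S j) z w). destruct (Pst_top j z Hz) as [-> | iq].
  - rewrite Rabs_R0. lra.
  - pose proof (theta_rr_bounds (S j) (idx q (S j) (trunc (S j) z)) (z (S j)) 0).
    pose proof (rho_step_branch (S j) (rhost q j) (rhost_nonneg j) _ _ (z (S j)) (w (S j)) iq ne).
    rewrite Rminus_0_r in *. rewrite rhost_S. lra.
Qed.

(* Points off the fibre over [x] get height 0: by [top_le_rhost_off_branch] this keeps
   heights Lipschitz. *)
Definition height_over (K : nat) (x z : seqR) : R := if decP (trunc K z = x) then z K else 0.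

Lemma height_over_lipschitz j x z w : Pst q (S j) z -> Pst q (S j) w ->
  Rabs (height_over (S j) x z - height_over (S j) x w) <= 2 * rhost q (S j) z w.
Proof.
  intros Hz Hw. unfold height_over.
  destruct (decP (trunc (S j) z = x)) as [ez|ez]; destruct (decP (trunc (S j) w = x)) as [ew|ew].
  - apply coord_le_rhost; auto.
  - rewrite Rminus_0_r. apply top_le_rhost_off_branch; congruence.
  - rewrite Rminus_0_l, Rabs_Ropp, rhost_sym. apply top_le_rhost_off_branch; congruence.
  - rewrite Rminus_diag, Rabs_R0. pose proof (rhost_nonneg (S j) z w). lra.
Qed.

(* The path from [w] to a point [w'] of another branch passes through the root
   [trunc (S c) w]. *)
Lemma rhost_trunc_le_off_branch c J w w' : (c <= J)%nat -> Pst q J w -> Pst q J w' ->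
  trunc (S c) w <> trunc (S c) w' -> rhost q J w (trunc (S c) w) <= rhost q J w w'.
Proof.
  intros Hle. revert w w'. induction Hle as [|J Hle IH]; intros w w' Hw Hw' ne.
  - rewrite (Pst_trunc_id c w Hw), rhost_refl. apply rhost_nonneg.
  - rewrite !rhost_S, (trunc_trunc_le (S c) (S J)), (trunc_ge (S c) w (S J)) by lia.
    rewrite <- (trunc_trunc (S c) (S J) w) at 1 by lia.
    apply rho_step_root; [apply rhost_nonneg | |].
    + intros E. apply ne. rewrite <- (trunc_trunc (S c) (S J) w), <- (trunc_trunc (S c) (S J) w'), E
        by lia. reflexivity.
    + apply IH; try apply Pst_trunc; auto. rewrite !trunc_trunc by lia. exact ne.
Qed.

Lemma Pst_Pinf c z : Pst q c z -> Pinf q z.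
Proof. intros H. exists (S c). split; [lia | exact H]. Qed.

Lemma Pst_trunc_below c L w : (c <= L)%nat -> Pst q L w -> Pst q c (trunc (S c) w).
Proof.
  intros Hle. revert w. induction Hle as [|L Hle IH]; intros w Hw.
  - rewrite (Pst_trunc_id c w Hw). exact Hw.
  - rewrite <- (trunc_trunc (S c) (S L) w) by lia. apply IH, Pst_trunc, Hw.
Qed.

Lemma pi_lipschitz c z w : Pinf q z -> Pinf q w ->
  Rabs (pi (S c) z - pi (S c) w) <= 2 * rhoinf q z w.
Proof.
  intros Hz Hw. destruct (Pinf_common z w Hz Hw c) as [L [HL [Hz' Hw']]].
  rewrite (rhoinf_eq L z w Hz' Hw'). apply coord_le_rhost; assumption.
Qed.

End Levels.

(** * Completeness of the levels *)

Section Sequences.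

Context {X : Type} (d : X -> X -> R).

Definition cauchy_seq (u : nat -> X) : Prop :=
  forall eps, 0 < eps -> exists N, forall m n, (N <= m)%nat -> (N <= n)%nat -> d (u m) (u n) < eps.

Definition seq_cvg (u : nat -> X) (l : X) : Prop :=
  forall eps, 0 < eps -> exists N, forall n, (N <= n)%nat -> d (u n) l < eps.

End Sequences.

Lemma Rdist_complete (u : nat -> R) : cauchy_seq Rdist u -> exists l, seq_cvg Rdist u l.
Proof. intros H. destruct (Rcomplete.R_complete u H) as [l Hl]. exists l. exact Hl. Qed.

Lemma seq_cvg_Rdist_bounds (u : nat -> R) l a b : seq_cvg Rdist u l ->
  (forall n, a <= u n <= b) -> a <= l <= b.
Proof.
  intros H Hb. unfold Rdist in H.
  split; apply Rnot_lt_le; intros Hlt;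
    [destruct (H (a - l) ltac:(lra)) as [N HN] | destruct (H (l - b) ltac:(lra)) as [N HN]];
    specialize (HN N (le_n N)); specialize (Hb N); unfold Rabs in HN; destruct Rcase_abs in HN; lra.
Qed.

Definition graft (K : nat) (x : seqR) (y : R) : seqR :=
  fun i => if Nat.eq_dec i K then y else x i.

Lemma graft_at K x y : graft K x y K = y.
Proof. unfold graft. destruct (Nat.eq_dec K K); congruence. Qed.

Lemma trunc_graft K x y : (forall i, (K <= i)%nat -> x i = 0) -> trunc K (graft K x y) = x.
Proof.
  intros Hx. apply functional_extensionality. intros i. unfold trunc, graft.
  destruct (Nat.ltb_spec i K); destruct (Nat.eq_dec i K); try lia; auto;
    symmetry; apply Hx; lia.
Qed.

Lemma Pst_graft q j x y : Pst q j x ->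
  (y = 0 \/ exists m, x = q (S j) m /\ 0 <= y <= rr (S j) m) -> Pst q (S j) (graft (S j) x y).
Proof.
  intros Hx Hy. assert (Hvan : forall i, (S j <= i)%nat -> x i = 0)
    by (intros i Hi; apply (Pst_vanish q j x Hx); lia).
  simpl. rewrite trunc_graft, graft_at by exact Hvan. split; [exact Hx | split; [|exact Hy]].
  intros i Hi. unfold graft. destruct (Nat.eq_dec i (S j)); [lia | apply Hvan; lia].
Qed.

Lemma level0_complete q u : (forall n, Pst q 0 (u n)) -> cauchy_seq (rhost q 0) u ->
  exists z, Pst q 0 z /\ seq_cvg (rhost q 0) u z.
Proof.
  intros Hu Hc.
  destruct (Rdist_complete (fun n => u n 0%nat)) as [l Hl].
  { intros eps He. destruct (Hc (eps / 2) ltac:(lra)) as [N HN]. exists N. intros m n Hm Hn.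
    pose proof (coord_le_rhost q 0 (u m) (u n) 0 (Hu m) (Hu n) (le_n 0)).
    specialize (HN m n Hm Hn). unfold Rdist. lra. }
  exists (graft 0 (fun _ => 0) l). split.
  - split.
    + rewrite graft_at. apply (seq_cvg_Rdist_bounds _ l 0 1 Hl). intros n. apply (Hu n).
    + intros [|i] Hi; [lia | reflexivity].
  - intros eps He. destruct (Hl eps He) as [N HN]. exists N. intros n Hn. simpl.
    rewrite graft_at. pose proof (theta_bounds 1 (u n 0%nat) l ltac:(lra)).
    specialize (HN n Hn). unfold Rdist in HN. lra.
Qed.

Section Admissible.

Variable q : nat -> nat -> seqR.
Hypothesis Hq : admissible q.

Lemma q_top_neq0 J m : q (S J) m J <> 0.
Proof. destruct (Hq (S J) ltac:(lia)) as [_ [_ [_ [H _]]]]. apply H. Qed.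

Lemma q_inj K m m' : (1 <= K)%nat -> q K m = q K m' -> m = m'.
Proof. intros HK. apply (Hq K HK). Qed.

Lemma Pst_level_or_branch c J w : (c <= J)%nat -> Pst q J w ->
  Pst q c w \/ exists m, trunc (S c) w = q (S c) m.
Proof.
  intros Hle. revert w. induction Hle as [|J Hle IH]; intros w Hw; [left; exact Hw|].
  destruct (IH _ (Pst_trunc q J w Hw)) as [Hc | [m Hm]].
  - destruct Hw as [_ [Hz [H0 | [m [Hm _]]]]].
    + left. rewrite trunc_id in Hc; [exact Hc|].
      intros i Hi. destruct (Nat.eq_dec i (S J)) as [-> | ne]; [exact H0 | apply Hz; lia].
    + destruct (Nat.eq_dec J c) as [-> | ne]; [right; exists m; exact Hm|].
      exfalso. apply (q_top_neq0 J m). rewrite <- Hm. apply (Pst_vanish q c _ Hc). lia.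
  - right. exists m. rewrite <- Hm, trunc_trunc by lia. reflexivity.
Qed.

Lemma height_over_bounds j x w : Pst q (S j) w ->
  (forall m, x = q (S j) m -> 0 <= height_over (S j) x w <= rr (S j) m) /\
  (~ inQ q (S j) x -> height_over (S j) x w = 0).
Proof.
  intros Hw. unfold height_over. destruct (decP (trunc (S j) w = x)) as [<- | ne].
  - destruct Hw as [_ [_ [H0 | [m' [Hm' Hb]]]]]; rewrite ?H0.
    + split; [intros m _; pose proof (rr_pos (S j) m); lra | reflexivity].
    + split.
      * intros m Hm. rewrite Hm in Hm'.
        rewrite <- (q_inj (S j) m m') in Hb by (lia || auto). exact Hb.
      * intros nq. exfalso. apply nq. exists m'. exact Hm'.
  - split; [intros m _; pose proof (rr_pos (S j) m); lra | reflexivity].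
Qed.

Section LevelStep.

Variables (j : nat) (u : nat -> seqR) (x : seqR) (y : R).
Hypotheses (Hu : forall n, Pst q (S j) (u n)) (Hc : cauchy_seq (rhost q (S j)) u)
  (Hx : Pst q j x) (Hx_lim : seq_cvg (rhost q j) (fun n => trunc (S j) (u n)) x)
  (Hy_lim : seq_cvg Rdist (fun n => height_over (S j) x (u n)) y).

Lemma height_limit_admissible : y = 0 \/ exists m, x = q (S j) m /\ 0 <= y <= rr (S j) m.
Proof.
  destruct (decP (inQ q (S j) x)) as [[m Hm] | nq].
  - right. exists m. split; [exact Hm|].
    apply (seq_cvg_Rdist_bounds _ y _ _ Hy_lim). intros n.
    exact (proj1 (height_over_bounds j x (u n) (Hu n)) m Hm).
  - left. enough (0 <= y <= 0) by lra.
    apply (seq_cvg_Rdist_bounds _ y _ _ Hy_lim). intros n.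
    rewrite (proj2 (height_over_bounds j x (u n) (Hu n)) nq). lra.
Qed.

(* A point [u n] on a branch rooted away from [x] is far from the later [u m], whose roots
   approach [x]; so, the sequence being Cauchy, such points are eventually low on their branch. *)
Lemma off_branch_heights_small eps : 0 < eps -> exists N, forall n, (N <= n)%nat ->
  trunc (S j) (u n) <> x -> inQ q (S j) (trunc (S j) (u n)) ->
  theta (rr (S j) (idx q (S j) (trunc (S j) (u n)))) (u n (S j)) 0 < eps.
Proof.
  intros He. destruct (Hc eps He) as [N HN]. exists N. intros n Hn ne iq.
  assert (Hpos : 0 < rhost q j (trunc (S j) (u n)) x).
  { destruct (rhost_nonneg q j (trunc (S j) (u n)) x) as [H | H]; [exact H|].
    exfalso. apply ne. apply (rhost_eq0 q j); auto using Pst_trunc. }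
  destruct (Hx_lim _ Hpos) as [N' HN']. set (m := Nat.max N N').
  specialize (HN' m ltac:(unfold m; lia)).
  assert (ne' : trunc (S j) (u n) <> trunc (S j) (u m)) by (intros E; rewrite <- E in HN'; lra).
  pose proof (rho_step_branch q (S j) (rhost q j) (rhost_nonneg q j) _ _ (u n (S j)) (u m (S j))
                iq ne').
  specialize (HN n m Hn ltac:(unfold m; lia)). rewrite rhost_S in HN. lra.
Qed.

Lemma graft_limit : seq_cvg (rhost q (S j)) u (graft (S j) x y).
Proof.
  intros eps He.
  destruct (Hx_lim (eps / 3) ltac:(lra)) as [N1 HN1].
  destruct (Hy_lim (eps / 3) ltac:(lra)) as [N2 HN2].
  destruct (off_branch_heights_small (eps / 3) ltac:(lra)) as [N3 HN3].
  exists (Nat.max N1 (Nat.max N2 N3)). intros n Hn.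
  specialize (HN1 n ltac:(lia)). specialize (HN2 n ltac:(lia)). specialize (HN3 n ltac:(lia)).
  rewrite rhost_S, graft_at, trunc_graft by (intros i Hi; apply (Pst_vanish q j x Hx); lia).
  unfold Rdist, height_over in HN2. destruct (decP (trunc (S j) (u n) = x)) as [e | ne].
  - rewrite e. pose proof (rho_step_same q (S j) (rhost q j) (rhost_refl q j) x (u n (S j)) y). lra.
  - rewrite Rminus_0_l, Rabs_Ropp in HN2.
    pose proof (theta_rr_bounds (S j) (idx q (S j) x) 0 y). rewrite Rminus_0_l, Rabs_Ropp in H.
    eapply Rle_lt_trans.
    + apply (rho_step_le q (S j) (rhost q j) _ _ _ _ (eps / 3) (eps / 3) ne);
        [intros iq; left; apply HN3; auto | intros _; lra | lra | lra].
    + lra.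
Qed.

End LevelStep.

Lemma level_complete j u : (forall n, Pst q j (u n)) -> cauchy_seq (rhost q j) u ->
  exists z, Pst q j z /\ seq_cvg (rhost q j) u z.
Proof.
  revert u. induction j as [|j IH]; intros u Hu Hc; [apply level0_complete; assumption|].
  destruct (IH (fun n => trunc (S j) (u n))) as [x [Hx Hx_lim]].
  { intros n. apply Pst_trunc, Hu. }
  { intros eps He. destruct (Hc eps He) as [N HN]. exists N. intros m n Hm Hn.
    eapply Rle_lt_trans; [apply rhost_trunc_le | apply HN; assumption]. }
  destruct (Rdist_complete (fun n => height_over (S j) x (u n))) as [y Hy_lim].
  { intros eps He. destruct (Hc (eps / 2) ltac:(lra)) as [N HN]. exists N. intros m n Hm Hn.
    pose proof (height_over_lipschitz q j x (u m) (u n) (Hu m) (Hu n)).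
    specialize (HN m n Hm Hn). unfold Rdist. lra. }
  exists (graft (S j) x y). split.
  - apply Pst_graft; [exact Hx | apply (height_limit_admissible j u x y Hu Hy_lim)].
  - apply graft_limit; assumption.
Qed.

End Admissible.

(** * Lipschitz maps on a dense subset of a metric space *)

Lemma inv_INR_S_pos n : 0 < / INR (S n).
Proof. apply Rinv_0_lt_compat, lt_0_INR. lia. Qed.

Lemma inv_INR_S_small eps : 0 < eps -> exists N, forall n, (N <= n)%nat -> / INR (S n) < eps.
Proof.
  intros He. destruct (archimed_cor1 eps He) as [N [HN HN0]]. exists N. intros n Hn.
  apply Rle_lt_trans with (/ INR N); [|exact HN].
  apply Rinv_le_contravar; [apply lt_0_INR; exact HN0 | apply le_INR; lia].
Qed.

Lemma Rle_plus_scaled_epsilon a b K : 0 <= K ->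
  (forall e, 0 < e -> a <= b + K * e) -> a <= b.
Proof.
  intros HK H. apply Rle_plus_epsilon. intros e He.
  specialize (H (e / (K + 1)) ltac:(apply Rdiv_lt_0_compat; lra)).
  assert (K * (e / (K + 1)) <= e); [|lra].
  apply Rle_trans with ((K + 1) * (e / (K + 1))); [|right; field; lra].
  apply Rmult_le_compat_r; [left; apply Rdiv_lt_0_compat|]; lra.
Qed.

Section Completion.

Context {A X : Type} (d : X -> X -> R) (j : A -> X).
Hypothesis Hd : is_metric d.

Lemma metric_cauchy_of_close (x : X) (u : nat -> A) :
  (forall n, d x (j (u n)) < / INR (S n)) -> cauchy_seq (fun a b => d (j a) (j b)) u.
Proof.
  destruct Hd as [_ [_ [Hsym Htri]]]. intros Hu eps He.
  destruct (inv_INR_S_small (eps / 2) ltac:(lra)) as [N HN]. exists N. intros m n Hm Hn.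
  pose proof (Htri (j (u m)) x (j (u n))). rewrite (Hsym (j (u m)) x) in H.
  pose proof (HN m Hm). pose proof (HN n Hn). pose proof (Hu m). pose proof (Hu n). lra.
Qed.

Lemma dist_pos_off_complete (C : A -> Prop) (x : X) :
  (forall u, (forall n, C (u n)) -> cauchy_seq (fun a b => d (j a) (j b)) u ->
     exists z, C z /\ seq_cvg (fun a b => d (j a) (j b)) u z) ->
  ~ (exists z, C z /\ x = j z) -> exists delta, 0 < delta /\ forall w, C w -> delta <= d x (j w).
Proof.
  intros Hcomplete Hx. apply NNPP. intros Hnot.
  assert (Hclose : forall n, exists w, C w /\ d x (j w) < / INR (S n)).
  { intros n. apply NNPP. intros Hn. apply Hnot. exists (/ INR (S n)).
    split; [apply inv_INR_S_pos|]. intros w Hw. apply Rnot_lt_le. intros Hlt.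
    apply Hn. exists w. auto. }
  destruct (choice _ Hclose) as [u Hu].
  destruct (Hcomplete u (fun n => proj1 (Hu n))) as [z [Hz Hlim]].
  { apply (metric_cauchy_of_close x). intros n. apply Hu. }
  apply Hx. exists z. split; [exact Hz|]. destruct Hd as [Hnn [Hdef [_ Htri]]].
  apply Hdef, Rle_antisym; [|apply Hnn].
  apply (Rle_plus_scaled_epsilon _ _ 2); [lra|]. intros e He.
  destruct (Hlim e He) as [N1 HN1]. destruct (inv_INR_S_small e He) as [N2 HN2].
  set (n := Nat.max N1 N2). specialize (HN1 n ltac:(lia)). specialize (HN2 n ltac:(lia)).
  pose proof (Htri x (j (u n)) (j z)). pose proof (proj2 (Hu n)). lra.
Qed.

Section Lipschitz.

Variables (D : A -> Prop) (g : A -> R) (L : R).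
Hypotheses (Hdense : forall x eps, 0 < eps -> exists z, D z /\ d x (j z) < eps)
  (HL : 0 <= L) (Hg : forall z w, D z -> D w -> Rabs (g z - g w) <= L * d (j z) (j w)).

(* The value of the extension at [x] is the limit of [g] along points of [D] approaching [x]. *)
Lemma lipschitz_value_exists x : exists l, forall w, D w -> Rabs (l - g w) <= L * d x (j w).
Proof.
  destruct Hd as [Hnn [_ [Hsym Htri]]].
  destruct (choice _ (fun n => Hdense x (/ INR (S n)) (inv_INR_S_pos n))) as [u Hu].
  destruct (Rdist_complete (fun n => g (u n))) as [l Hl].
  { intros eps He.
    destruct (metric_cauchy_of_close x u (fun n => proj2 (Hu n)) (eps / (L + 1))) as [N HN];
      [apply Rdiv_lt_0_compat; lra|].
    exists N. intros m n Hm Hn. specialize (HN m n Hm Hn).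
    pose proof (Hg (u m) (u n) (proj1 (Hu m)) (proj1 (Hu n))). pose proof (Hnn (j (u m)) (j (u n))).
    assert (eps / (L + 1) * (L + 1) = eps) by (field; lra). unfold Rdist. nra. }
  exists l. intros w Hw. apply (Rle_plus_scaled_epsilon _ _ (L + 1)); [lra|]. intros e He.
  destruct (Hl e He) as [N1 HN1]. destruct (inv_INR_S_small e He) as [N2 HN2].
  set (n := Nat.max N1 N2). specialize (HN1 n ltac:(lia)). specialize (HN2 n ltac:(lia)).
  pose proof (Hg (u n) w (proj1 (Hu n)) Hw). pose proof (proj2 (Hu n)).
  pose proof (Htri (j (u n)) x (j w)). rewrite (Hsym (j (u n)) x) in H1.
  pose proof (Rdist_tri l (g w) (g (u n))). rewrite Rdist_sym in HN1. unfold Rdist in *. nra.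
Qed.

Lemma lipschitz_extension : exists f : X -> R,
  (forall x y, Rabs (f x - f y) <= L * d x y) /\ (forall z, D z -> f (j z) = g z).
Proof.
  destruct (choice _ lipschitz_value_exists) as [f Hf].
  destruct Hd as [_ [Hdef [_ Htri]]].
  exists f. split.
  - intros x y. apply (Rle_plus_scaled_epsilon _ _ (2 * L)); [lra|]. intros e He.
    destruct (Hdense y e He) as [w [Hw Hyw]].
    pose proof (Hf x w Hw). pose proof (Hf y w Hw). pose proof (Htri x y (j w)).
    pose proof (Rdist_tri (f x) (f y) (g w)). rewrite (Rdist_sym (g w)) in H2.
    unfold Rdist in *. nra.
  - intros z Hz. pose proof (Hf (j z) z Hz) as H.
    rewrite (proj2 (Hdef (j z) (j z)) eq_refl), Rmult_0_r in H.
    apply Rminus_diag_uniq, Rabs_eq_0. pose proof (Rabs_pos (f (j z) - g z)). lra.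
Qed.

End Lipschitz.
End Completion.

(** * The extension of [pi_k] *)

Section Extension.

Variables (q : nat -> nat -> seqR) (X : Type) (dX : X -> X -> R) (j : seqR -> X).
Hypotheses (Hq : admissible q) (HX : is_completion q dX j).

Lemma dX_level c z w : Pst q c z -> Pst q c w -> dX (j z) (j w) = rhost q c z w.
Proof.
  intros Hz Hw. destruct HX as [_ [_ [Hiso _]]].
  rewrite Hiso by (eapply Pst_Pinf; eassumption). apply rhoinf_eq; assumption.
Qed.

Lemma level_dist_pos c x : ~ (exists z, Pst q c z /\ x = j z) ->
  exists delta, 0 < delta /\ forall w, Pst q c w -> delta <= dX x (j w).
Proof.
  apply dist_pos_off_complete; [apply HX|]. intros u Hu Hc.
  destruct (level_complete q Hq c u Hu) as [z [Hz Hlim]].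
  - intros eps He. destruct (Hc eps He) as [N HN]. exists N. intros m n Hm Hn.
    rewrite <- (dX_level c) by auto. apply HN; assumption.
  - exists z. split; [exact Hz|]. intros eps He. destruct (Hlim eps He) as [N HN]. exists N.
    intros n Hn. rewrite (dX_level c) by auto. apply HN; assumption.
Qed.

(* Otherwise the root [trunc (S c) w0], a point of level [c], would lie within [3 delta / 4]
   of [x]. *)
Lemma near_points_same_branch c x delta w0 w : 0 < delta ->
  (forall v, Pst q c v -> delta <= dX x (j v)) -> Pinf q w0 -> Pinf q w ->
  dX x (j w0) < delta / 4 -> dX x (j w) < delta / 4 -> trunc (S c) w = trunc (S c) w0.
Proof.
  intros Hdelta Hsep Hw0 Hw D0 D. destruct HX as [[_ [_ [Hsym Htri]]] [_ [Hiso _]]].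
  apply NNPP. intros ne.
  destruct (Pinf_common q w0 w Hw0 Hw c) as [L [HL [Hw0L HwL]]].
  pose proof (rhost_trunc_le_off_branch q c L w0 w HL Hw0L HwL (not_eq_sym ne)) as Hroot.
  pose proof (Pst_trunc_below q c L w0 HL Hw0L) as Hr.
  rewrite <- !dX_level in Hroot by (auto; apply (Pst_le q c); auto).
  pose proof (Hsep _ Hr). pose proof (Htri x (j w0) (j (trunc (S c) w0))).
  pose proof (Htri (j w0) x (j w)). rewrite (Hsym (j w0) x) in H1. lra.
Qed.

Lemma extension_off_level c f :
  (forall x y, Rabs (f x - f y) <= 2 * dX x y) -> (forall z, Pinf q z -> f (j z) = pi (S c) z) ->
  forall x, ~ (exists z, Pst q c z /\ x = j z) -> exists m, f x = pi (S c) (q (S c) m).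
Proof.
  intros Hf_lip Hf_ext x Hx. destruct HX as [_ [_ [_ Hdense]]].
  destruct (level_dist_pos c x Hx) as [delta [Hdelta Hsep]].
  destruct (Hdense x (delta / 4) ltac:(lra)) as [w0 [Hw0 D0]].
  destruct (Pinf_common q w0 w0 Hw0 Hw0 c) as [L [HL [Hw0L _]]].
  destruct (Pst_level_or_branch q Hq c L w0 HL Hw0L) as [Hc | [m Hm]].
  { specialize (Hsep w0 Hc). lra. }
  exists m. apply Rminus_diag_uniq, Rabs_eq_0, Rle_antisym; [|apply Rabs_pos].
  apply Rle_plus_epsilon. intros e He.
  destruct (Hdense x (Rmin (delta / 4) (e / 2))) as [w [Hw Dw]]; [apply Rmin_glb_lt; lra|].
  pose proof (Rmin_l (delta / 4) (e / 2)). pose proof (Rmin_r (delta / 4) (e / 2)).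
  assert (Hpi : pi (S c) w = pi (S c) (q (S c) m)).
  { unfold pi. simpl.
    rewrite <- Hm, <- (near_points_same_branch c x delta w0 w), trunc_lt by (auto || lra).
    reflexivity. }
  rewrite <- Hpi, <- Hf_ext by exact Hw. pose proof (Hf_lip x (j w)). lra.
Qed.

End Extension.

Theorem lemma4p8 (q : nat -> nat -> seqR) (Hq : admissible q)
  (X : Type) (dX : X -> X -> R) (j : seqR -> X) (HX : is_completion q dX j)
  (k : nat) (hk : (1 <= k)%nat) :
  (* pi_k is continuous on cal P_infinity *)
  (forall z, Pinf q z -> forall eps, 0 < eps -> exists delta, 0 < delta /\
     forall w, Pinf q w -> rhoinf q z w < delta -> Rabs (pi k z - pi k w) < eps) /\
  (* it extends continuously to P_infinity, with values in A_k off i_k(P_k) *)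
  exists f : X -> R,
    (forall x eps, 0 < eps -> exists delta, 0 < delta /\
       forall y, dX x y < delta -> Rabs (f x - f y) < eps) /\
    (forall z, Pinf q z -> f (j z) = pi k z) /\
    (forall x, ~ (exists z, PP q k z /\ x = j z) -> exists m, f x = pi k (q k m)).
Proof.
  destruct k as [|c]; [lia|].
  pose proof HX as [Hmetric [_ [Hiso Hdense]]].
  split.
  { intros z Hz eps He. exists (eps / 2). split; [lra|]. intros w Hw Hzw.
    pose proof (pi_lipschitz q c z w Hz Hw). lra. }
  destruct (lipschitz_extension dX j Hmetric (Pinf q) (pi (S c)) 2 Hdense ltac:(lra))
    as [f [Hf_lip Hf_ext]].
  { intros z w Hz Hw. rewrite Hiso by assumption. apply pi_lipschitz; assumption. }
  exists f. split; [|split; [exact Hf_ext|]].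
  - intros x eps He. exists (eps / 2). split; [lra|]. intros y Hy. pose proof (Hf_lip x y). lra.
  - exact (extension_off_level q X dX j Hq HX c f Hf_lip Hf_ext).
Qed.
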